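(* Let $(\sigma_n)_{n \geq 1}$ be a sequence of permutations with $\sigma_n \in \mathcal{S}_n$ for all $n$, and let $\Sigma_n \in U(n)$ be the permutation matrix of $\sigma_n$, i.e. $\Sigma_n e_j = e_{\sigma_n(j)}$. Then $(\Sigma_n)_{n \geq 1}$ is a virtual isometry if and only if $(\sigma_n)_{n \geq 1}$ is a virtual permutation.
   Context: For $n \geq m \geq 1$, let $p_{n,m}:\mathcal{S}_n\to\mathcal{S}_m$ map $\sigma$ to the permutation obtained by deleting all elements of $\{m+1,\dots,n\}$ from the cycle structure of $\sigma$. A virtual permutation is a sequence $(\sigma_n)_{n\ge1}$ with $\sigma_n\in\mathcal{S}_n$ and $\sigma_m = p_{n,m}(\sigma_n)$ for all $n\ge m\ge1$. Let $(e_k)_{k\ge1}$ be the canonical basis of $\ell^2$; identify $\mathbb{C}^n$ with the span of $e_1,\dots,e_n$ and $U(n)$ with the unitary operators on $\ell^2$ fixing every $e_k$, $k>n$. For $n\ge m\ge1$ and $u\in U(n)$, $\pi_{n,m}(u)$ is the unique $v\in U(m)$ such that the range of $u-v$ is contained in $(u-\mathrm{Id})(\mathrm{span}\{e_k:k>m\})$ (existence and uniqueness are known). A virtual isometry is a sequence $(u_n)_{n\ge1}$ with $u_n\in U(n)$ and $\pi_{n+1,n}(u_{n+1})=u_n$ for all $n\ge1$. *)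

From HB Require Import structures.
From mathcomp Require Import all_boot all_order all_algebra all_fingroup.
From mathcomp Require Import complex.
From mathcomp Require Import reals.
Set Implicit Arguments. Unset Strict Implicit. Unset Printing Implicit Defensive.
Import Order.TTheory GRing.Theory Num.Theory.
Local Open Scope ring_scope.

(* Conventions: the basis vector e_{k+1} of the paper is the k-th (0-based)
   coordinate; C^n = 'cV_n; an element of S_n is a permutation of 'I_n
   (j <-> j+1). *)

Fixpoint cycle_next n (s : 'S_n) (m k : nat) (x : 'I_n) : 'I_n :=
  match k with
  | 0 => x
  | k'.+1 => let y := s x in if (y < m)%N then y else cycle_next s m k' y
  end.

(* p_{n,m}(s) evaluated at i (i < m <= n): the image of i in the permutation
   obtained by deleting all elements >= m (i.e. {m+1,...,n} in 1-based terms)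
   from the cycle structure of s, namely the first element of the sequence
   s(i), s^2(i), ... that is < m. *)
Definition pnm_val n (s : 'S_n) (m : nat) (i : nat) : nat :=
  match insub i : option 'I_n with
  | Some x => val (cycle_next s m n x)
  | None => i
  end.

Definition virtual_permutation (sigma : forall n : nat, 'S_n) : Prop :=
  forall (m n : nat), (1 <= m)%N -> (m <= n)%N ->
    forall i : 'I_m, val (sigma m i) = pnm_val (sigma n) m (val i).

Section Iso.
Variable R : realType.
Local Notation C := R[i].

Definition conjT n (u : 'M[C]_n) : 'M[C]_n := (map_mx (@conjc R) u)^T.

Definition unitary n (u : 'M[C]_n) : Prop := u *m conjT u = 1%:M.

(* an operator on C^m extended to C^n (m <= n) by fixing e_k, k > m *)
Definition embed_mx m n (v : 'M[C]_m) : 'M[C]_n :=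
  \matrix_(i < n, j < n)
    match (insub (val i) : option 'I_m), (insub (val j) : option 'I_m) with
    | Some i', Some j' => v i' j'
    | _, _ => (i == j)%:R
    end.

(* diagonal projection onto span{e_k : k > m} (1-based), inside C^n *)
Definition tail_proj m n : 'M[C]_n := diag_mx (\row_(k < n) ((m <= k)%N)%:R).

(* pi_{n,m}(u) = v : v in U(m) and range(u - v) is contained in
   (u - Id)(span{e_k : k > m}).  Ranges are column spaces, expressed via
   row spaces of transposes. *)
Definition pi_rel m n (u : 'M[C]_n) (v : 'M[C]_m) : Prop :=
  unitary v /\
  (((u - @embed_mx m n v)^T) <= (((u - 1%:M) *m tail_proj m n)^T))%MS.

Definition virtual_isometry (u : forall n : nat, 'M[C]_n) : Prop :=
  (forall n, (1 <= n)%N -> unitary (u n)) /\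
  (forall n, (1 <= n)%N -> @pi_rel n n.+1 (u n.+1) (u n)).

End Iso.

Definition perm_matrix (R : realType) n (s : 'S_n) : 'M[R[i]]_n :=
  \matrix_(i < n, j < n) (i == s j)%:R.

From Pilot Require Import Defs.
From HB Require Import structures.
From mathcomp Require Import all_boot all_order all_algebra all_fingroup.
From mathcomp Require Import complex reals.
Set Implicit Arguments. Unset Strict Implicit. Unset Printing Implicit Defensive.

(* Column j of Sigma_{n+1} - Sigma_n is e_{s'(j)} - e_{s(j)}
   (s = sigma_n fixing n+1, s' = sigma_{n+1}), and the range of
   (Sigma_{n+1} - Id) on span{e_{n+1}} is the line through
   e_{s'(n+1)} - e_{n+1}.  A difference of two unit vectors lies on that line
   iff s(j) = s'(j), or s'(j) = n+1 and s(j) = s'(n+1): this says exactly that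
   s = p_{n+1,n}(s').  So (Sigma_n) is a virtual isometry iff consecutive
   permutations are compatible, and consecutive compatibility implies the full
   one because deleting {m+1,...,n} from the cycles can be done one element at
   a time. *)

Definition perm_nat n (s : 'S_n) (x : nat) : nat :=
  match insub x : option 'I_n with Some y => val (s y) | None => x end.

Lemma perm_natE n (s : 'S_n) (x : 'I_n) : perm_nat s x = val (s x).
Proof. by rewrite /perm_nat valK. Qed.

(* [first_below f m x y]: y is the first of f x, f (f x), ... that is below m;
   for f = perm_nat s this y is p_{n,m}(s)(x). *)
Inductive first_below (f : nat -> nat) (m : nat) : nat -> nat -> Prop :=
| FirstBelowNow x : f x < m -> first_below f m x (f x)
| FirstBelowLater x y : m <= f x -> first_below f m (f x) y -> first_below f m x y.

Section FirstBelow.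
Variable f : nat -> nat.

Lemma first_below_inv m x y : first_below f m x y ->
  (f x < m /\ y = f x) \/ (m <= f x /\ first_below f m (f x) y).
Proof. by case=> [z hz|z w hz H]; [left|right]. Qed.

Lemma first_below_lt m x y : first_below f m x y -> y < m.
Proof. by elim. Qed.

Lemma first_below_functional m x y y' :
  first_below f m x y -> first_below f m x y' -> y = y'.
Proof.
move=> H; elim: H y' => [z hz|z w hz _ IH] y' /first_below_inv [[h1 ->]|[h1 h2]] //.
- by rewrite leqNgt hz in h1.
- by rewrite leqNgt h1 in hz.
- exact: IH.
Qed.

Lemma first_below_mono m n x z : m <= n ->
  first_below f n x z -> z < m -> first_below f m x z.
Proof.
move=> mn; elim=> [y _ ym|y w ny _ IH wm]; first exact: FirstBelowNow.
by apply: FirstBelowLater (IH wm); apply: leq_trans ny.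
Qed.

Lemma first_below_cat m n x z y : m <= n ->
  first_below f n x z -> m <= z -> first_below f m z y -> first_below f m x y.
Proof.
move=> mn; elim=> [w _ mw H|w v nw _ IH mv H]; first exact: FirstBelowLater.
by apply: FirstBelowLater (IH mv H); apply: leq_trans nw.
Qed.

(* p_{n,m} = p_{n',m} o p_{n,n'}: first returns of the first-return map are
   first returns. *)
Lemma first_below_transfer (g : nat -> nat) m n x y : m <= n ->
  (forall j, j < n -> first_below f n j (g j)) ->
  x < n -> first_below g m x y -> first_below f m x y.
Proof.
move=> mn fg xn H; elim: H xn => [z zm|z w mz _ IH] zn.
  exact: first_below_mono mn (fg z zn) zm.
have fgz := fg z zn.
exact: first_below_cat mn fgz mz (IH (first_below_lt fgz)).
Qed.

End FirstBelow.

Lemma first_below_cycle_next n (s : 'S_n) m k o (x : 'I_n) :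
  0 < o <= k -> iter o s x < m ->
  first_below (perm_nat s) m x (Defs.cycle_next s m k x).
Proof.
elim: o k x => [|o IH] [|k] x //= ok hx.
case: ifP => sxm; first by rewrite -perm_natE; apply: FirstBelowNow; rewrite perm_natE.
apply: FirstBelowLater; first by rewrite perm_natE leqNgt sxm.
rewrite perm_natE; case: o IH ok hx => [|o] IH ok hx; first by rewrite hx in sxm.
by apply: IH; rewrite // -iterSr.
Qed.

Lemma pnm_val_first_below n (s : 'S_n) m i : i < m -> m <= n ->
  first_below (perm_nat s) m i (pnm_val s m i).
Proof.
move=> im mn; have iN := leq_trans im mn.
rewrite /pnm_val insubT; pose x := Ordinal iN.
apply: (@first_below_cycle_next _ _ _ _ (fingraph.order s x) x).
  by rewrite fingraph.order_gt0 /=; apply: leq_trans (max_card _) _; rewrite card_ord.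
by rewrite fingraph.iter_order //; apply: perm_inj.
Qed.

Lemma virtual_permutationP (sigma : forall n : nat, 'S_n) :
  virtual_permutation sigma <->
  (forall n j, j < n -> first_below (perm_nat (sigma n.+1)) n j (perm_nat (sigma n) j)).
Proof.
split=> [V n j jn | consec m n m1 mn i].
  have := V n n.+1 (leq_ltn_trans (leq0n j) jn) (leqnSn n) (Ordinal jn).
  rewrite -(perm_natE _ (Ordinal jn)) /= => ->.
  exact: pnm_val_first_below.
apply: (first_below_functional _ (pnm_val_first_below _ (ltn_ord i) mn)).
rewrite -(subnKC mn); elim: (n - m)%N => [|d IH].
  by rewrite addn0 -perm_natE; apply: FirstBelowNow; rewrite perm_natE ltn_ord.
rewrite addnS; apply: (@first_below_transfer _ _ m (m + d)) IH.
- exact: leq_addr.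
- exact: consec.
- exact: leq_trans (ltn_ord i) (leq_addr _ _).
Qed.

Lemma eq_ord_max n (i : 'I_n.+1) : (i == ord_max) = (n <= i).
Proof. by rewrite -val_eqE /= eqn_leq -ltnS ltn_ord. Qed.

Lemma lift_max_neq n (k : 'I_n) : (lift ord_max k == ord_max) = false.
Proof. by rewrite eq_sym (negbTE (neq_lift _ _)). Qed.

Lemma first_below_lift_max n (t : 'S_n.+1) (j y : 'I_n) :
  first_below (perm_nat t) n j y <->
  (t (lift ord_max j) == lift ord_max y)
  || (t (lift ord_max j) == ord_max) && (lift ord_max y == t ord_max).
Proof.
set x := lift ord_max j.
have tj : perm_nat t j = t x by rewrite -perm_natE lift_max.
have tn : perm_nat t n = t ord_max by rewrite -perm_natE.
split=> [/first_below_inv [[_ yt] | [ntj /first_below_inv H]]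
        | /orP[/eqP tx | /andP[/eqP tx /eqP yt]]].
- by apply/orP; left; apply/eqP/ord_inj; rewrite lift_max yt tj.
- have /eqP tx : t x == ord_max by rewrite eq_ord_max -tj.
  rewrite tx eqxx orbC; case: H => [[_ yt] | [ntn _]].
    by apply/orP; left; apply/eqP/ord_inj; rewrite lift_max yt tj tx tn.
  have /eqP tmax : t ord_max == ord_max by rewrite eq_ord_max -tn; rewrite tj tx in ntn.
  suff xmax : x = ord_max by move: (lift_max_neq j); rewrite -/x xmax eqxx.
  by apply: (@perm_inj _ t); rewrite tx tmax.
- by rewrite -(lift_max y) -tx -tj; apply: FirstBelowNow; rewrite tj tx lift_max.
- apply: FirstBelowLater; first by rewrite tj tx.
  by rewrite tj tx -(lift_max y) yt -tn; apply: FirstBelowNow; rewrite tn -yt lift_max.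
Qed.

Import GRing.Theory.
Local Open Scope ring_scope.

Lemma sub_delta_diff (F : fieldType) N (p q r k : 'I_N) :
  (('e_p - 'e_q : 'rV[F]_N) <= ('e_r - 'e_k : 'rV_N))%MS =
  [|| p == q, (p == r) && (q == k) | (p == k) && (q == r)].
Proof.
apply/sub_rVP/idP => [[a E] |
  /or3P[/eqP<- | /andP[/eqP-> /eqP->] | /andP[/eqP-> /eqP->]]].
- have coord l : (l == p)%:R - (l == q)%:R = a * ((l == r)%:R - (l == k)%:R) :> F.
    by move/matrixP/(_ 0 l): E; rewrite !mxE.
  have [//|pq /=] := eqVneq p q.
  have in_rk l : (l == p) != (l == q) -> (l == r) || (l == k).
    apply: contraR => /norP[/negbTE lr /negbTE lk].
    move: (coord l); rewrite lr lk subrr mulr0 => /eqP; rewrite subr_eq0.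
    by case: (l == p); case: (l == q); rewrite ?eqxx //= ?oner_eq0 // eq_sym oner_eq0.
  have p_rk : (p == r) || (p == k) by apply: in_rk; rewrite eqxx (negbTE pq).
  have q_rk : (q == r) || (q == k) by apply: in_rk; rewrite eqxx (eq_sym q) (negbTE pq).
  by case/orP: p_rk => /eqP pe; case/orP: q_rk => /eqP qe;
    rewrite pe qe ?eqxx ?orbT // in pq *.
- by exists 0; rewrite subrr scale0r.
- by exists 1; rewrite scale1r.
- by exists (-1); rewrite scaleN1r opprB.
Qed.

Section PermMatrix.
Variable R : realType.

Lemma perm_matrixE n (s : 'S_n) : perm_matrix R s = perm_mx s^-1.
Proof.
apply/matrixP => i j; rewrite /perm_matrix /perm_mx !mxE.
by rewrite -(inj_eq (@perm_inj _ s) (s^-1%g i)) permKV eq_sym.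
Qed.

Lemma perm_matrix_unitary n (s : 'S_n) : unitary (perm_matrix R s).
Proof.
rewrite /unitary /conjT perm_matrixE.
have -> : map_mx (@conjc R) (perm_mx s^-1) = perm_mx s^-1.
  by apply/matrixP => i j; rewrite /perm_mx !mxE conjc_nat.
by rewrite tr_perm_mx -perm_mxM mulgV perm_mx1.
Qed.

Lemma embed_perm_matrix n (s : 'S_n) :
  embed_mx n.+1 (perm_matrix R s) = perm_matrix R (lift_perm ord_max ord_max s).
Proof.
have insub_lift (k : 'I_n) : insub (val (lift ord_max k)) = Some k.
  by rewrite (_ : val _ = val k) ?valK //; exact: lift_max.
have insub_max : insub (val (@ord_max n)) = None :> option 'I_n.
  by rewrite insubF //= ltnn.
apply/matrixP => i j; rewrite !mxE.
case: (unliftP ord_max i) => [i'|] ->; case: (unliftP ord_max j) => [j'|] ->;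
  rewrite ?insub_lift ?insub_max ?lift_perm_lift ?lift_perm_id //.
  by rewrite mxE (inj_eq (@lift_inj _ ord_max)).
by rewrite !(negbTE (neq_lift _ _)).
Qed.

Lemma row_tr_perm_matrix n (s : 'S_n) j : row j (perm_matrix R s)^T = 'e_(s j).
Proof. by apply/rowP => l; rewrite !mxE eqxx. Qed.

Lemma tail_proj_last n : tail_proj R n n.+1 = delta_mx ord_max ord_max.
Proof.
apply/matrixP => i j; rewrite !mxE -eq_ord_max.
have [<-|ij] := eqVneq i j; first by rewrite andbb mulr1n.
by rewrite mulr0n; case: eqVneq => [iM|] //=; rewrite -iM eq_sym (negbTE ij).
Qed.

Lemma tr_mul_tail_proj n (u : 'M[R[i]]_n.+1) :
  ((u *m tail_proj R n n.+1)^T :=: row ord_max u^T)%MS.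
Proof.
rewrite tail_proj_last trmx_mul trmx_delta -(mul_delta_mx (0 : 'I_1)) -mulmxA -rowE.
by apply: eqmxMfull; rewrite /row_full mxrank_delta.
Qed.

Lemma pi_rel_perm_matrix_rows n (t : 'S_n.+1) (s : 'S_n) :
  let s' := lift_perm ord_max ord_max s in
  pi_rel (perm_matrix R t) (perm_matrix R s) <->
  forall j, (('e_(t j) - 'e_(s' j) : 'rV[R[i]]_n.+1)
             <= ('e_(t ord_max) - 'e_ord_max : 'rV_n.+1))%MS.
Proof.
move=> s'.
have row_diff j : row j (perm_matrix R t - perm_matrix R s')^T = 'e_(t j) - 'e_(s' j).
  by rewrite !linearB /= !row_tr_perm_matrix.
have row_max : row ord_max (perm_matrix R t - 1%:M)^T = 'e_(t ord_max) - 'e_ord_max.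
  by rewrite !linearB /= row_tr_perm_matrix trmx1 row1.
rewrite /pi_rel embed_perm_matrix tr_mul_tail_proj row_max.
split=> [[_ /row_subP H] j | H]; first by rewrite -row_diff.
split; first exact: perm_matrix_unitary.
by apply/row_subP => j; rewrite row_diff.
Qed.

Lemma pi_rel_perm_matrix n (t : 'S_n.+1) (s : 'S_n) :
  pi_rel (perm_matrix R t) (perm_matrix R s) <->
  (forall j, (j < n)%N -> first_below (perm_nat t) n j (perm_nat s j)).
Proof.
rewrite pi_rel_perm_matrix_rows; split=> [H j jn | H j].
  have := H (lift ord_max (Ordinal jn)).
  rewrite sub_delta_diff lift_perm_lift (inj_eq perm_inj) !lift_max_neq andbF.
  by rewrite -[j]/(val (Ordinal jn)) perm_natE => Hj; apply/first_below_lift_max.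
case: (unliftP ord_max j) => [j'|] ->.
  rewrite sub_delta_diff lift_perm_lift (inj_eq perm_inj) !lift_max_neq andbF.
  by apply/first_below_lift_max; rewrite -perm_natE; apply: H.
by rewrite sub_delta_diff lift_perm_id !eqxx orbT.
Qed.

End PermMatrix.

Theorem proposition2p3 (R : realType) (sigma : forall n : nat, 'S_n) :
  virtual_isometry (fun n => perm_matrix R (sigma n)) <->
  virtual_permutation sigma.
Proof.
rewrite virtual_permutationP; split=> [[_ pi_sigma] n j jn | consec].
  have n_gt0 : (0 < n)%N by apply: leq_ltn_trans jn.
  exact: (pi_rel_perm_matrix _ _ _).1 (pi_sigma n n_gt0) j jn.
split=> n _; first exact: perm_matrix_unitary.
by apply/pi_rel_perm_matrix => j; apply: consec.
Qed.
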